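(* Consider the model $Y=X\beta+\varepsilon$, $X\in\mathbb{R}^{N\times D}$ with $N\ge D$, $\varepsilon\sim\mathcal{N}(0,\tau^{-1}I_N)$, $\tau>0$, and prior $\beta\sim\mathcal{N}(0,\Sigma_\beta)$ with $\Sigma_\beta$ positive definite. Let $X=V\,\mathrm{diag}(\lambda)U^\top+\bar V\,\mathrm{diag}(\bar\lambda)\bar U^\top$ be a singular value decomposition, where $[U,\bar U]\in\mathbb{R}^{D\times D}$ is orthogonal with $U\in\mathbb{R}^{D\times M}$, $[V,\bar V]\in\mathbb{R}^{N\times D}$ has orthonormal columns, $\lambda=(\lambda_1,\dots,\lambda_M)$, $\bar\lambda=(\bar\lambda_1,\dots,\bar\lambda_{D-M})$ and $\lambda_1\ge\dots\ge\lambda_M\ge\bar\lambda_1\ge\dots\ge\bar\lambda_{D-M}\ge0$. The exact posterior is $\mathcal{N}(\mu_N,\Sigma_N)$ with $\Sigma_N^{-1}=\Sigma_\beta^{-1}+\tau X^\top X$, $\mu_N=\tau\Sigma_NX^\top Y$, and the approximate posterior obtained by replacing $X$ by $XUU^\top$ is $\mathcal{N}(\tilde\mu_N,\tilde\Sigma_N)$ with $\tilde\Sigma_N^{-1}=\Sigma_\beta^{-1}+\tau UU^\top X^\top XUU^\top$, $\tilde\mu_N=\tau\tilde\Sigma_NUU^\top X^\top Y$. Then $$\|\mu_N-\tilde\mu_N\|_2\le\frac{\bar\lambda_1\big(\bar\lambda_1\|\bar U^\top\tilde\mu_N\|_2+\|\bar V^\top Y\|_2\big)}{\|\tau\Sigma_\beta\|_2^{-1}+\bar\lambda_{D-M}^2}$$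 and $\|\Sigma_N^{-1}-\tilde\Sigma_N^{-1}\|_2=\tau\bar\lambda_1^2$ (indeed $\Sigma_N^{-1}-\tilde\Sigma_N^{-1}=\tau\bar U\,\mathrm{diag}(\bar\lambda\odot\bar\lambda)\bar U^\top$).
   Context: $\|\cdot\|_2$ on matrices is the spectral norm; $\odot$ is componentwise multiplication. *)

From HB Require Import structures.
From mathcomp Require Import all_boot all_order all_algebra.
Set Implicit Arguments. Unset Strict Implicit. Unset Printing Implicit Defensive.
Import Order.TTheory GRing.Theory Num.Theory.
Local Open Scope ring_scope.

Definition norm2 (R : rcfType) (n : nat) (v : 'cV[R]_n) : R :=
  Num.sqrt (\sum_(i < n) v i 0 ^+ 2).

Definition is_specnorm (R : rcfType) (m n : nat) (A : 'M[R]_(m, n)) (s : R) : Prop :=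
  (forall v : 'cV[R]_n, norm2 (A *m v) <= s * norm2 v) /\
  (forall s' : R, (forall v : 'cV[R]_n, norm2 (A *m v) <= s' * norm2 v) -> s <= s').

Definition posdef (R : rcfType) (n : nat) (A : 'M[R]_n) : Prop :=
  A^T = A /\ (forall v : 'cV[R]_n, v != 0 -> 0 < (v^T *m A *m v) 0 0).

Definition hadamard (R : rcfType) (n : nat) (a b : 'rV[R]_n) : 'rV[R]_n :=
  \row_j (a 0 j * b 0 j).

From HB Require Import structures.
From mathcomp Require Import all_boot all_order all_algebra.
From mathcomp Require Import ring lra.
Set Implicit Arguments. Unset Strict Implicit. Unset Printing Implicit Defensive.
Import Order.TTheory GRing.Theory Num.Theory.
Local Open Scope ring_scope.

(* The argument has three parts.
   1. Linear algebra of the SVD: with orthonormal [V, Vb] and orthogonal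
      [U, Ub], X^T X = U L^2 U^T + Ub Lb^2 Ub^T and P X^T X P = U L^2 U^T for
      P = U U^T, so the two posterior precisions differ by tau Ub Lb^2 Ub^T.
      A matrix Q diag(d) Q^T with orthonormal columns Q has spectral norm
      max d, which gives the exact value tau lamb_1^2.
   2. Coercivity: if s is the spectral norm of the positive definite matrix
      tau Sb then <x, Sb^-1 x> >= tau s^-1 |x|^2, and since
      |X x| >= lamb_{D-M} |x| the exact precision satisfies
      <x, SN^-1 x> >= tau (s^-1 + lamb_{D-M}^2) |x|^2.
   3. The residual identity SN^-1 (muN - mut) = tau Ub w, with
      w = Lb Vb^T Y - Lb^2 Ub^T mut; coercivity turns it into
      (s^-1 + lamb_{D-M}^2) |muN - mut| <= |w|, and |w| is bounded by the
      triangle inequality. *)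

Definition dotv (R : rcfType) (n : nat) (u v : 'cV[R]_n) : R := (u^T *m v) 0 0.

Section InnerProduct.
Variable R : rcfType.
Implicit Types (n m : nat).

Lemma dotvE n (u v : 'cV[R]_n) : dotv u v = \sum_(i < n) u i 0 * v i 0.
Proof. by rewrite /dotv mxE; apply: eq_bigr => i _; rewrite mxE. Qed.

Lemma norm2E n (v : 'cV[R]_n) : norm2 v = Num.sqrt (dotv v v).
Proof. by rewrite /norm2 dotvE; congr Num.sqrt; apply: eq_bigr => i _; rewrite expr2. Qed.

Lemma dotv_ge0 n (v : 'cV[R]_n) : 0 <= dotv v v.
Proof. by rewrite dotvE; apply: sumr_ge0 => i _; rewrite -expr2 sqr_ge0. Qed.

Lemma dotv_gt0 n (v : 'cV[R]_n) : v != 0 -> 0 < dotv v v.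
Proof.
move=> nz; rewrite lt_def dotv_ge0 andbT; apply: contra nz => /eqP v0.
have /psumr_eq0P sq0 : \sum_(i < n) v i 0 * v i 0 = 0 by rewrite -dotvE.
apply/eqP/matrixP => i j; rewrite (ord1 j) mxE.
have /eqP : v i 0 * v i 0 = 0 by apply: sq0 => // k _; rewrite -expr2 sqr_ge0.
by rewrite mulf_eq0 orbb => /eqP.
Qed.

Lemma dotvC n (u v : 'cV[R]_n) : dotv u v = dotv v u.
Proof. by rewrite !dotvE; apply: eq_bigr => i _; rewrite mulrC. Qed.

Lemma dotv_mulr m n (u : 'cV[R]_m) (A : 'M[R]_(m, n)) (v : 'cV[R]_n) :
  dotv u (A *m v) = dotv (A^T *m u) v.
Proof. by rewrite /dotv trmx_mul trmxK mulmxA. Qed.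

Lemma dotv0l n (v : 'cV[R]_n) : dotv 0 v = 0.
Proof. by rewrite /dotv trmx0 mul0mx mxE. Qed.

Lemma dotvDl n (u w v : 'cV[R]_n) : dotv (u + w) v = dotv u v + dotv w v.
Proof. by rewrite /dotv linearD /= mulmxDl mxE. Qed.

Lemma dotvDr n (u w v : 'cV[R]_n) : dotv v (u + w) = dotv v u + dotv v w.
Proof. by rewrite /dotv mulmxDr mxE. Qed.

Lemma dotvZl n (a : R) (u v : 'cV[R]_n) : dotv (a *: u) v = a * dotv u v.
Proof. by rewrite /dotv linearZ /= -scalemxAl mxE. Qed.

Lemma dotvZr n (a : R) (u v : 'cV[R]_n) : dotv v (a *: u) = a * dotv v u.
Proof. by rewrite /dotv -scalemxAr mxE. Qed.

Lemma dotv_col m n (a : 'cV[R]_m) (b : 'cV[R]_n) :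
  dotv (col_mx a b) (col_mx a b) = dotv a a + dotv b b.
Proof. by rewrite /dotv tr_col_mx mul_row_col mxE. Qed.

(* Cauchy-Schwarz for the semi-inner product <u, S w> of a symmetric positive
   semidefinite S: the quadratic x^2 a + 2xy b + y^2 c is nonnegative. *)
Lemma cauchy_schwarz_psd n (S : 'M[R]_n) (u w : 'cV[R]_n) :
  S^T = S -> (forall v, 0 <= dotv v (S *m v)) ->
  dotv u (S *m w) ^+ 2 <= dotv u (S *m u) * dotv w (S *m w).
Proof.
move=> Ssym Spsd.
set a := dotv u (S *m u); set b := dotv u (S *m w); set c := dotv w (S *m w).
have bwu : dotv w (S *m u) = b by rewrite dotv_mulr Ssym dotvC.
have Q x y : 0 <= x ^+ 2 * a + 2 * x * y * b + y ^+ 2 * c.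
  have := Spsd (x *: u + y *: w).
  rewrite mulmxDr -!scalemxAr !dotvDl !dotvDr !dotvZl !dotvZr bwu -/a -/b -/c.
  by move/le_trans; apply; rewrite le_eqVlt; apply/orP; left; apply/eqP; ring.
have ha := Q 1 0; have hc := Q 0 1.
have h1 := Q c (- b); have h2 := Q b (- a); have h3 := Q 1 (- b).
have [c0|c0] := eqVneq c 0.
  have [a0|a0] := eqVneq a 0; first by rewrite c0 a0 in h3 *; nra.
  have : 0 < a by rewrite lt_def a0; nra.
  by rewrite c0 in h2 *; nra.
have : 0 < c by rewrite lt_def c0; nra.
nra.
Qed.

Lemma norm2_ge0 n (v : 'cV[R]_n) : 0 <= norm2 v.
Proof. by rewrite norm2E sqrtr_ge0. Qed.

Lemma norm2_sq n (v : 'cV[R]_n) : norm2 v ^+ 2 = dotv v v.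
Proof. by rewrite norm2E sqr_sqrtr // dotv_ge0. Qed.

Lemma norm2_le n (v : 'cV[R]_n) (t : R) :
  0 <= t -> dotv v v <= t ^+ 2 -> norm2 v <= t.
Proof.
move=> t0 h; rewrite norm2E -(ger0_norm t0) -sqrtr_sqr.
by rewrite ler_sqrt // sqr_ge0.
Qed.

Lemma dotv_le n (u w : 'cV[R]_n) : dotv u w <= norm2 u * norm2 w.
Proof.
have id_psd (v : 'cV[R]_n) : 0 <= dotv v (1%:M *m v) by rewrite mul1mx dotv_ge0.
have := cauchy_schwarz_psd u w (tr_scalar_mx _ _) id_psd.
rewrite !mul1mx -!norm2_sq -exprMn => h.
have p0 : 0 <= norm2 u * norm2 w by rewrite mulr_ge0 ?norm2_ge0.
move: h p0; set p := norm2 u * norm2 w; set b := dotv u w; nra.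
Qed.

Lemma norm2D n (u w : 'cV[R]_n) : norm2 (u + w) <= norm2 u + norm2 w.
Proof.
apply: norm2_le; first by rewrite addr_ge0 ?norm2_ge0.
rewrite dotvDl !dotvDr (dotvC w u) -!norm2_sq.
have := dotv_le u w; nra.
Qed.

Lemma norm2Z n (a : R) (v : 'cV[R]_n) : norm2 (a *: v) = `|a| * norm2 v.
Proof.
by rewrite !norm2E dotvZl dotvZr mulrA -expr2 sqrtrM ?sqr_ge0 // sqrtr_sqr.
Qed.

Lemma norm2N n (v : 'cV[R]_n) : norm2 (- v) = norm2 v.
Proof. by rewrite -scaleN1r norm2Z normrN normr1 mul1r. Qed.

Lemma norm2_orth m n (Q : 'M[R]_(m, n)) (v : 'cV[R]_n) :
  Q^T *m Q = 1%:M -> norm2 (Q *m v) = norm2 v.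
Proof. by move=> QQ; rewrite !norm2E dotv_mulr mulmxA QQ mul1mx. Qed.

(* ... and their transposes are contractions (Bessel's inequality):
   |Q^T x|^2 = <Q Q^T x, x> <= |Q^T x| |x|. *)
Lemma norm2_tr_orth_le m n (Q : 'M[R]_(m, n)) (x : 'cV[R]_m) :
  Q^T *m Q = 1%:M -> norm2 (Q^T *m x) <= norm2 x.
Proof.
move=> QQ; have := dotv_le x (Q *m (Q^T *m x)).
rewrite dotv_mulr norm2_orth // -norm2_sq expr2.
have := norm2_ge0 (Q^T *m x); have := norm2_ge0 x; nra.
Qed.

Lemma norm2_diag_le n (d : 'rV[R]_n) (y : 'cV[R]_n) (t : R) :
  0 <= t -> (forall i, d 0 i ^+ 2 <= t ^+ 2) ->
  norm2 (diag_mx d *m y) <= t * norm2 y.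
Proof.
move=> t0 h; apply: norm2_le; first by rewrite mulr_ge0 ?norm2_ge0.
rewrite exprMn norm2_sq !dotvE mulr_sumr; apply: ler_sum => i _.
by rewrite mul_diag_mx mxE -!expr2 exprMn; apply: ler_wpM2r; rewrite ?sqr_ge0.
Qed.

Lemma dotv_diag_ge n (d : 'rV[R]_n) (y : 'cV[R]_n) (c : R) :
  (forall i, c <= d 0 i ^+ 2) ->
  c * dotv y y <= dotv (diag_mx d *m y) (diag_mx d *m y).
Proof.
move=> h; rewrite !dotvE mulr_sumr; apply: ler_sum => i _.
by rewrite mul_diag_mx mxE -!expr2 exprMn; apply: ler_wpM2r; rewrite ?sqr_ge0.
Qed.

Lemma quad_pos_unit n (A : 'M[R]_n) :
  (forall x, x != 0 -> 0 < dotv x (A *m x)) -> A \in unitmx.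
Proof.
move=> hA; rewrite unitmxE unitfE; apply/negP => /det0P [v nz vA].
have := hA v^T; rewrite trmx_eq0 nz => /(_ isT).
by rewrite /dotv trmxK mulmxA vA mul0mx mxE ltxx.
Qed.

Lemma coercive_unit n (A : 'M[R]_n) (c : R) :
  0 < c -> (forall x, c * dotv x x <= dotv x (A *m x)) -> A \in unitmx.
Proof.
move=> c0 hA; apply: quad_pos_unit => x nz.
by apply: lt_le_trans (hA x); rewrite mulr_gt0 ?dotv_gt0.
Qed.

Lemma coercive_norm_ge n (A : 'M[R]_n) (c : R) (x : 'cV[R]_n) :
  0 < c -> (forall x, c * dotv x x <= dotv x (A *m x)) ->
  c * norm2 x <= norm2 (A *m x).
Proof.
move=> c0 hA; have := le_trans (hA x) (dotv_le _ _); rewrite -norm2_sq.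
have := norm2_ge0 x; have := norm2_ge0 (A *m x).
have [->|nz] := eqVneq (norm2 x) 0; first by rewrite mulr0.
have : 0 < norm2 x by rewrite lt_def nz norm2_ge0.
move: c0; set a := norm2 x; set b := norm2 (A *m x); nra.
Qed.

End InnerProduct.

Section SpectralNorm.
Variable R : rcfType.
Implicit Types (n m k : nat).

Lemma specnormZ m n (A : 'M[R]_(m, n)) (a s : R) :
  0 < a -> is_specnorm A s -> is_specnorm (a *: A) (a * s).
Proof.
move=> a0 [Aup Amin]; split=> [v|s' hs'].
  by rewrite -scalemxAl norm2Z gtr0_norm // -mulrA ler_pM2l.
have ai0 : 0 < a^-1 by rewrite invr_gt0.
rewrite -(ler_pM2l ai0) mulrA mulVf ?gt_eqF // mul1r.
apply: Amin => v; rewrite -(ler_pM2l a0) !mulrA mulfV ?gt_eqF // mul1r.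
by have := hs' v; rewrite -scalemxAl norm2Z gtr0_norm.
Qed.

(* For Q with orthonormal columns and 0 <= d_i <= d_i0, the spectral norm of
   Q diag(d) Q^T is d_i0: Q^T is a contraction, Q an isometry, and the bound
   is attained at the i0-th column of Q. *)
Lemma specnorm_orth_diag m k (Q : 'M[R]_(m, k)) (d : 'rV[R]_k) (i0 : 'I_k) :
  Q^T *m Q = 1%:M -> (forall i, 0 <= d 0 i <= d 0 i0) ->
  is_specnorm (Q *m diag_mx d *m Q^T) (d 0 i0).
Proof.
move=> QQ dbnd; have d0 : 0 <= d 0 i0 by case/andP: (dbnd i0).
split=> [v|s' hs'].
  rewrite -!mulmxA norm2_orth //.
  apply: le_trans (ler_wpM2l d0 (norm2_tr_orth_le v QQ)).
  apply: norm2_diag_le => // i; case/andP: (dbnd i) => di0 di.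
  by rewrite ler_pXn2r ?nnegrE.
pose e : 'cV[R]_k := delta_mx i0 0.
have ne : norm2 e = 1.
  by rewrite norm2E /dotv trmx_delta mul_delta_mx mxE !eqxx sqrtr1.
have De : diag_mx d *m e = d 0 i0 *: e.
  apply/matrixP => i j; rewrite mul_diag_mx !mxE (ord1 j).
  by case: eqP => [->|_]; rewrite ?mulr1 ?mulr0.
have := hs' (Q *m e).
rewrite (norm2_orth e QQ) -!mulmxA (mulmxA Q^T) QQ mul1mx De -scalemxAr.
by rewrite norm2Z (norm2_orth _ QQ) ne !mulr1 ger0_norm.
Qed.

Lemma posdef_quad_gt0 n (S : 'M[R]_n) (v : 'cV[R]_n) :
  posdef S -> v != 0 -> 0 < dotv v (S *m v).
Proof. by case=> _ Spd nz; rewrite /dotv mulmxA; exact: Spd. Qed.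

Lemma posdef_quad_ge0 n (S : 'M[R]_n) (v : 'cV[R]_n) :
  posdef S -> 0 <= dotv v (S *m v).
Proof.
move=> Spd; have [->|nz] := eqVneq v 0; first by rewrite dotv0l.
exact: ltW (posdef_quad_gt0 Spd nz).
Qed.

Lemma posdefZ n (S : 'M[R]_n) (a : R) : 0 < a -> posdef S -> posdef (a *: S).
Proof.
move=> a0 Spd; split; first by rewrite linearZ /= (proj1 Spd).
by move=> v nz; rewrite -scalemxAr -scalemxAl mxE mulr_gt0 // (proj2 Spd).
Qed.

Lemma specnorm_quad_le n (S : 'M[R]_n) (s : R) (w : 'cV[R]_n) :
  is_specnorm S s -> dotv w (S *m w) <= s * dotv w w.
Proof.
case=> Sup _; apply: le_trans (dotv_le _ _) _; rewrite -norm2_sq.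
have := Sup w; have := norm2_ge0 w; have := norm2_ge0 (S *m w).
set p := norm2 w; set q := norm2 (S *m w); nra.
Qed.

Lemma specnorm_gt0 n (S : 'M[R]_n) (s : R) :
  (0 < n)%N -> posdef S -> is_specnorm S s -> 0 < s.
Proof.
move=> n0 Spd Sn; pose v : 'cV[R]_n := const_mx 1.
have nz : v != 0.
  apply/eqP => /matrixP /(_ (Ordinal n0) 0); rewrite !mxE => /eqP.
  by rewrite oner_eq0.
have := posdef_quad_gt0 Spd nz; have := specnorm_quad_le v Sn.
have := dotv_gt0 nz; set a := dotv v (S *m v); set q := dotv v v; nra.
Qed.

(* For symmetric positive semidefinite S with <w, S w> <= s |w|^2 we have
   |S u|^2 <= s <u, S u>, by Cauchy-Schwarz for the form <., S .>. *)
Lemma psd_image_le n (S : 'M[R]_n) (s : R) (u : 'cV[R]_n) :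
  S^T = S -> (forall v, 0 <= dotv v (S *m v)) -> 0 <= s ->
  (forall w, dotv w (S *m w) <= s * dotv w w) ->
  dotv (S *m u) (S *m u) <= s * dotv u (S *m u).
Proof.
move=> Ssym Spsd s0 Sup.
have := cauchy_schwarz_psd u (S *m u) Ssym Spsd.
rewrite dotv_mulr Ssym.
have := Sup (S *m u); have := dotv_ge0 (S *m u); have := Spsd u.
set b := dotv (S *m u) (S *m u); set a := dotv u (S *m u).
set c := dotv (S *m u) (S *m (S *m u)) => ha hb hw hc.
have [b0|bpos] := eqVneq b 0; first by rewrite b0 mulr_ge0.
have : 0 < b by rewrite lt_def bpos hb.
have := ler_wpM2l ha hw; nra.
Qed.

(* If s is the spectral norm of a positive definite S, then the quadratic form
   of S^-1 is bounded below by s^-1: with u = S^-1 x, |x|^2 = |S u|^2 <= s <u, S u>. *)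
Lemma specnorm_inv_quad_ge n (S : 'M[R]_n) (s : R) (x : 'cV[R]_n) :
  (0 < n)%N -> posdef S -> is_specnorm S s ->
  s^-1 * dotv x x <= dotv x (invmx S *m x).
Proof.
move=> n0 Spd Sn; have s0 := specnorm_gt0 n0 Spd Sn.
have Sunit : S \in unitmx by apply: quad_pos_unit => v; exact: posdef_quad_gt0.
set u := invmx S *m x; have Su : S *m u = x by rewrite /u mulKVmx.
have := psd_image_le u (proj1 Spd) (fun v => posdef_quad_ge0 v Spd) (ltW s0)
  (fun w => specnorm_quad_le w Sn).
rewrite Su (dotvC u x) => h.
by rewrite -(ler_pM2l s0) mulrA mulfV ?gt_eqF // mul1r.
Qed.

(* The same bound when the spectral norm is known only for a multiple c S:
   (c S)^-1 = c^-1 S^-1 gives <x, S^-1 x> >= c s^-1 |x|^2. *)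
Lemma specnorm_scaled_inv_quad_ge n (S : 'M[R]_n) (c s : R) (x : 'cV[R]_n) :
  (0 < n)%N -> 0 < c -> posdef S -> is_specnorm (c *: S) s ->
  c * s^-1 * dotv x x <= dotv x (invmx S *m x).
Proof.
move=> n0 c0 Spd Sn; have cSpd := posdefZ c0 Spd.
have cSunit : c *: S \in unitmx.
  by apply: quad_pos_unit => v; exact: posdef_quad_gt0.
have := specnorm_inv_quad_ge x n0 cSpd Sn.
rewrite invmxZ // -scalemxAl dotvZr -(ler_pM2l c0) !mulrA mulfV ?gt_eqF //.
by rewrite mul1r.
Qed.

End SpectralNorm.

Lemma orthonormal_blocks (R : rcfType) (n p q : nat)
    (A : 'M[R]_(n, p)) (B : 'M[R]_(n, q)) :
  (row_mx A B)^T *m row_mx A B = 1%:M ->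
  [/\ A^T *m A = 1%:M, A^T *m B = 0, B^T *m A = 0 & B^T *m B = 1%:M].
Proof.
rewrite tr_row_mx mul_col_row scalar_mx_block.
by case/eq_block_mx => AA AB BA BB.
Qed.

(* No ordering of the singular values is
   needed here. *)
Section SingularValueDecomposition.
Variables (R : rcfType) (N m k : nat).
Variables (X : 'M[R]_(N, m + k)) (U : 'M[R]_(m + k, m)) (Ub : 'M[R]_(m + k, k)).
Variables (V : 'M[R]_(N, m)) (Vb : 'M[R]_(N, k)) (lam : 'rV[R]_m) (lamb : 'rV[R]_k).
Hypothesis UUb_orth : (row_mx U Ub)^T *m row_mx U Ub = 1%:M.
Hypothesis UUb_orth_tr : row_mx U Ub *m (row_mx U Ub)^T = 1%:M.
Hypothesis VVb_orth : (row_mx V Vb)^T *m row_mx V Vb = 1%:M.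
Hypothesis X_svd : X = V *m diag_mx lam *m U^T + Vb *m diag_mx lamb *m Ub^T.

Local Notation L := (diag_mx lam).
Local Notation Lb := (diag_mx lamb).
Local Notation P := (U *m U^T).

Lemma dotv_split (x : 'cV[R]_(m + k)) :
  dotv x x = dotv (U^T *m x) (U^T *m x) + dotv (Ub^T *m x) (Ub^T *m x).
Proof.
have WW : ((row_mx U Ub)^T)^T *m (row_mx U Ub)^T = 1%:M by rewrite trmxK.
rewrite -dotv_col -!norm2_sq -(norm2_orth x WW).
by rewrite tr_row_mx mul_col_mx.
Qed.

Lemma X_factor : X = row_mx V Vb *m col_mx (L *m U^T) (Lb *m Ub^T).
Proof. by rewrite mul_row_col X_svd !mulmxA. Qed.

Lemma gram_svd : X^T *m X = U *m (L *m L) *m U^T + Ub *m (Lb *m Lb) *m Ub^T.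
Proof.
set C := col_mx (L *m U^T) (Lb *m Ub^T).
rewrite X_factor trmx_mul -(mulmxA C^T) (mulmxA _ (row_mx V Vb)) VVb_orth mul1mx.
rewrite /C tr_col_mx mul_row_col.
by rewrite !trmx_mul !trmxK !tr_diag_mx !mulmxA.
Qed.

Lemma compressed_gram : P *m X^T *m X *m P = U *m (L *m L) *m U^T.
Proof.
have [UU UUb _ _] := orthonormal_blocks UUb_orth.
have UXX : U^T *m (X^T *m X) = L *m L *m U^T.
  by rewrite gram_svd mulmxDr !mulmxA UU UUb mul1mx !mul0mx addr0.
rewrite -(mulmxA _ X^T) -(mulmxA U) UXX -!mulmxA (mulmxA U^T) UU mul1mx.
by rewrite !mulmxA.
Qed.

Lemma precision_gap (S0 : 'M[R]_(m + k)) (tau : R) :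
  (S0 + tau *: (X^T *m X)) - (S0 + tau *: (P *m X^T *m X *m P))
  = tau *: (Ub *m (Lb *m Lb) *m Ub^T).
Proof.
rewrite opprD addrACA subrr add0r -scalerBr compressed_gram gram_svd.
by rewrite addrAC subrr add0r.
Qed.

Lemma Ub_tr_X_tr : Ub^T *m X^T = Lb *m Vb^T.
Proof.
have [_ _ UbU UbUb] := orthonormal_blocks UUb_orth.
rewrite X_svd linearD /= !trmx_mul !trmxK !tr_diag_mx mulmxDr !mulmxA UbU UbUb.
by rewrite !mul0mx mul1mx add0r.
Qed.

Lemma dotv_X_ge (l : R) (x : 'cV[R]_(m + k)) :
  (forall i, l ^+ 2 <= lam 0 i ^+ 2) -> (forall j, l ^+ 2 <= lamb 0 j ^+ 2) ->
  l ^+ 2 * dotv x x <= dotv (X *m x) (X *m x).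
Proof.
move=> hlam hlamb.
have -> : dotv (X *m x) (X *m x) =
    dotv (col_mx (L *m (U^T *m x)) (Lb *m (Ub^T *m x)))
         (col_mx (L *m (U^T *m x)) (Lb *m (Ub^T *m x))).
  by rewrite X_factor -mulmxA -!norm2_sq (norm2_orth _ VVb_orth) mul_col_mx !mulmxA.
rewrite dotv_col dotv_split mulrDr.
by apply: lerD; exact: dotv_diag_ge.
Qed.

(* Coercivity of the exact posterior precision: the prior contributes
   tau c |x|^2 and the likelihood tau |X x|^2 >= tau l^2 |x|^2. *)
Lemma precision_coercive (S0 : 'M[R]_(m + k)) (tau c l : R) (x : 'cV[R]_(m + k)) :
  0 < tau -> (forall y, tau * c * dotv y y <= dotv y (S0 *m y)) ->
  (forall i, l ^+ 2 <= lam 0 i ^+ 2) -> (forall j, l ^+ 2 <= lamb 0 j ^+ 2) ->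
  tau * (c + l ^+ 2) * dotv x x <= dotv x ((S0 + tau *: (X^T *m X)) *m x).
Proof.
move=> tau0 hS0 hlam hlamb.
rewrite mulmxDl dotvDr -scalemxAl dotvZr -mulmxA (dotv_mulr x X^T) trmxK.
rewrite mulrDr mulrDl; apply: lerD; first exact: hS0.
by rewrite -mulrA ler_pM2l //; exact: dotv_X_ge.
Qed.

(* The approximate precision only adds the nonnegative form |X P x|^2. *)
Lemma compressed_precision_coercive (S0 : 'M[R]_(m + k)) (tau c : R)
    (x : 'cV[R]_(m + k)) :
  0 <= tau -> (forall y, tau * c * dotv y y <= dotv y (S0 *m y)) ->
  tau * c * dotv x x <= dotv x ((S0 + tau *: (P *m X^T *m X *m P)) *m x).
Proof.
move=> tau0 hS0; apply: le_trans (hS0 x) _.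
have -> : P *m X^T *m X *m P = (X *m P)^T *m (X *m P).
  by rewrite trmx_mul trmx_mul trmxK !mulmxA.
rewrite mulmxDl dotvDr -scalemxAl dotvZr lerDl mulr_ge0 //.
by rewrite -mulmxA (dotv_mulr x (X *m P)^T) trmxK dotv_ge0.
Qed.

Lemma mean_residual (S0 : 'M[R]_(m + k)) (Y : 'cV[R]_N) (tau : R) :
  let A := S0 + tau *: (X^T *m X) in
  let At := S0 + tau *: (P *m X^T *m X *m P) in
  let mu := tau *: (invmx A *m X^T *m Y) in
  let mut := tau *: (invmx At *m P *m X^T *m Y) in
  A \in unitmx -> At \in unitmx ->
  A *m (mu - mut) =
    tau *: (Ub *m (Lb *m (Vb^T *m Y) - Lb *m Lb *m (Ub^T *m mut))).
Proof.
move=> A At mu mut Aunit Atunit.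
have Amu : A *m mu = tau *: (X^T *m Y).
  by rewrite /mu -scalemxAr !mulmxA mulmxV // mul1mx.
have Atmut : At *m mut = tau *: (P *m X^T *m Y).
  by rewrite /mut -scalemxAr !mulmxA mulmxV // mul1mx.
have A_split : A = At + tau *: (Ub *m (Lb *m Lb) *m Ub^T).
  by rewrite -(precision_gap S0) addrC subrK.
have compl : 1%:M - P = Ub *m Ub^T.
  by rewrite -UUb_orth_tr tr_row_mx mul_row_col addrAC subrr add0r.
rewrite mulmxBr Amu {1}A_split mulmxDl Atmut -scalemxAl -scalerDr -scalerBr.
congr (_ *: _); rewrite opprD addrA -{1}(mul1mx (X^T *m Y)) -(mulmxA P).
rewrite -mulmxBl compl mulmxBr; congr (_ - _).
  by rewrite -mulmxA (mulmxA Ub^T) Ub_tr_X_tr !mulmxA.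
by rewrite !mulmxA.
Qed.

(* If the prior precision S0 satisfies
   <y, S0 y> >= tau c |y|^2, all lam are >= l and all lamb lie in [l, lmax],
   then coercivity and the residual identity give (c + l^2) |mu - mut| <= |w|,
   and the triangle inequality bounds |w|. *)
Lemma mean_error_bound (S0 : 'M[R]_(m + k)) (Y : 'cV[R]_N) (tau c l lmax : R) :
  0 < tau -> 0 < c -> 0 <= l -> 0 <= lmax ->
  (forall i, l <= lam 0 i) -> (forall j, l <= lamb 0 j <= lmax) ->
  (forall y, tau * c * dotv y y <= dotv y (S0 *m y)) ->
  let mu := tau *: (invmx (S0 + tau *: (X^T *m X)) *m X^T *m Y) in
  let mut := tau *: (invmx (S0 + tau *: (P *m X^T *m X *m P)) *m P *m X^T *m Y) in
  norm2 (mu - mut) <=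
    lmax * (lmax * norm2 (Ub^T *m mut) + norm2 (Vb^T *m Y)) / (c + l ^+ 2).
Proof.
move=> tau0 c0 l0 lmax0 hlam hlamb hS0 /=.
set mu := tau *: _; set mut := tau *: _.
have sq_le a b : 0 <= a -> a <= b -> a ^+ 2 <= b ^+ 2.
  by move=> a0 ab; rewrite ler_pXn2r ?nnegrE //; apply: le_trans ab.
have lamb_l j : l <= lamb 0 j by case/andP: (hlamb j).
have lamb_lmax j : lamb 0 j <= lmax by case/andP: (hlamb j).
have lamb0 j : 0 <= lamb 0 j := le_trans l0 (lamb_l j).
have cl0 : 0 < c + l ^+ 2 by rewrite ltr_wpDr ?sqr_ge0.
have coer y : tau * (c + l ^+ 2) * dotv y y
              <= dotv y ((S0 + tau *: (X^T *m X)) *m y).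
  by apply: precision_coercive => // [i|j]; apply: sq_le.
have coer_t y : tau * c * dotv y y
                <= dotv y ((S0 + tau *: (P *m X^T *m X *m P)) *m y).
  exact: compressed_precision_coercive (ltW tau0) hS0.
have Aunit := coercive_unit (mulr_gt0 tau0 cl0) coer.
have Atunit := coercive_unit (mulr_gt0 tau0 c0) coer_t.
set w := Lb *m (Vb^T *m Y) - Lb *m Lb *m (Ub^T *m mut).
have [_ _ _ UbUb] := orthonormal_blocks UUb_orth.
have err_w : (c + l ^+ 2) * norm2 (mu - mut) <= norm2 w.
  have := coercive_norm_ge (mu - mut) (mulr_gt0 tau0 cl0) coer.
  rewrite mean_residual // norm2Z (norm2_orth _ UbUb) gtr0_norm //.
  by rewrite -mulrA ler_pM2l.
have Lb_le z : norm2 (Lb *m z) <= lmax * norm2 z.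
  by apply: norm2_diag_le => // j; apply: sq_le.
have Lb2_le z : norm2 (Lb *m Lb *m z) <= lmax * (lmax * norm2 z).
  by rewrite -mulmxA; apply: le_trans (Lb_le _) _; rewrite ler_wpM2l.
rewrite ler_pdivlMr // mulrC; apply: le_trans err_w _.
apply: le_trans (norm2D _ _) _; rewrite norm2N mulrDr addrC.
by apply: lerD; [exact: Lb2_le | exact: Lb_le].
Qed.

End SingularValueDecomposition.

(* The theorem: c = s^-1 comes from the spectral norm s of tau Sb, and the
   singular value bounds come from the ordering lamb_1 >= ... >= lamb_{D-M}. *)
Theorem mainTheorem3 (R : rcfType) (N M K : nat)
  (X : 'M[R]_(N, M + K.+1)) (Y : 'cV[R]_N) (tau : R) (Sb : 'M[R]_(M + K.+1))
  (U : 'M[R]_(M + K.+1, M)) (Ub : 'M[R]_(M + K.+1, K.+1))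
  (V : 'M[R]_(N, M)) (Vb : 'M[R]_(N, K.+1))
  (lam : 'rV[R]_M) (lamb : 'rV[R]_K.+1) :
  (M + K.+1 <= N)%N ->
  0 < tau ->
  posdef Sb ->
  (row_mx U Ub)^T *m row_mx U Ub = 1%:M ->
  row_mx U Ub *m (row_mx U Ub)^T = 1%:M ->
  (row_mx V Vb)^T *m row_mx V Vb = 1%:M ->
  (forall i j : 'I_M, (i <= j)%N -> lam 0 j <= lam 0 i) ->
  (forall i j : 'I_K.+1, (i <= j)%N -> lamb 0 j <= lamb 0 i) ->
  (forall i : 'I_M, lamb 0 ord0 <= lam 0 i) ->
  0 <= lamb 0 ord_max ->
  X = V *m diag_mx lam *m U^T + Vb *m diag_mx lamb *m Ub^T ->
  let SNinv := invmx Sb + tau *: (X^T *m X) in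
  let SN := invmx SNinv in
  let muN := tau *: (SN *m X^T *m Y) in
  let P := U *m U^T in
  let SNtinv := invmx Sb + tau *: (P *m X^T *m X *m P) in
  let SNt := invmx SNtinv in
  let mut := tau *: (SNt *m P *m X^T *m Y) in
  (forall s : R, is_specnorm (tau *: Sb) s ->
     norm2 (muN - mut) <=
       lamb 0 ord0 * (lamb 0 ord0 * norm2 (Ub^T *m mut) + norm2 (Vb^T *m Y))
       / (s^-1 + lamb 0 ord_max ^+ 2))
  /\ SNinv - SNtinv = tau *: (Ub *m diag_mx (hadamard lamb lamb) *m Ub^T)
  /\ is_specnorm (SNinv - SNtinv) (tau * lamb 0 ord0 ^+ 2).
Proof.
move=> _ tau0 Sb_pd hU hUt hV _ lamb_dec lam_ge lamb_min hX.
move=> SNinv SN muN P SNtinv SNt mut.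
have lamb_bnd j : lamb 0 ord_max <= lamb 0 j <= lamb 0 ord0.
  by rewrite !lamb_dec ?leq_ord.
have lamb1_ge0 : 0 <= lamb 0 ord0 by apply: le_trans lamb_min _; rewrite lamb_dec.
have D_gt0 : (0 < M + K.+1)%N by rewrite addnS.
have gap : SNinv - SNtinv = tau *: (Ub *m diag_mx (hadamard lamb lamb) *m Ub^T).
  by rewrite (precision_gap hU hV hX) /hadamard mulmx_diag.
split; [|split=> //].
- move=> s hs; have s0 := specnorm_gt0 D_gt0 (posdefZ tau0 Sb_pd) hs.
  apply: (mean_error_bound hU hUt hV hX) => //; first by rewrite invr_gt0.
  + by move=> i; apply: le_trans (lam_ge i); rewrite lamb_dec.
  + by move=> y; exact: specnorm_scaled_inv_quad_ge y D_gt0 tau0 Sb_pd hs.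
have [_ _ _ UbUb] := orthonormal_blocks hU.
have -> : lamb 0 ord0 ^+ 2 = hadamard lamb lamb 0 ord0 by rewrite mxE expr2.
rewrite gap; apply: specnormZ => //; apply: specnorm_orth_diag => // j.
have /andP [lj jl] := lamb_bnd j; have lamb_j0 := le_trans lamb_min lj.
by rewrite !mxE mulr_ge0 ?ler_pM.
Qed.
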